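(* Let $A=\mathrm{diag}(G_1,\dots,G_m,[1])\in\mathbb{R}^{n\times n}$, $m\geq 1$, where the trailing block $[1]$ may or may not be present, with $G_j=\begin{bmatrix}c_j&s_j\\-s_j&c_j\end{bmatrix}$, $c_j^2+s_j^2=1$, $s_j\neq 0$, and $0<c_1<c_2<\cdots<c_m<1$. Let $v_0\in\mathbb{R}^n$ be a unit norm vector with $d(A,v_0)\geq 2$ and $v_0^{(1)}\neq 0$. Then the sequence $\{v_k\}$ of the iteration ACI($1$) below converges to a single limit vector.
   Context: Block partitioning: every $v\in\mathbb{R}^n$ is written as $v=[v^{(1)};\dots;v^{(m)};v^{(m+1)}]$ with $v^{(j)}\in\mathbb{R}^2$ for $j=1,\dots,m$ (conforming with the blocks $G_j$) and $v^{(m+1)}\in\mathbb{R}$ (present only if the block $[1]$ is present). ACI($1$): for $k=0,1,2,\dots$: $\widetilde w_k=(A-\alpha_kI)v_k$ with $\alpha_k=v_k^TAv_k$; $w_k=\widetilde w_k/\|\widetilde w_k\|$; $\widetilde v_{k+1}=(A^T-\beta_kI)w_k$ with $\beta_k=w_k^TAw_k$; $v_{k+1}=\widetilde v_{k+1}/\|\widetilde v_{k+1}\|$. $d(A,v)$ is the grade of $v$ w.r.t. $A$ (degree of the monic polynomial $p$ of smallest degree with $p(A)v=0$); $\|\cdot\|$ is the Euclidean norm. *)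

From HB Require Import structures.
From mathcomp Require Import all_boot all_order all_algebra.
From mathcomp Require Import all_classical all_reals all_analysis.
Set Implicit Arguments. Unset Strict Implicit. Unset Printing Implicit Defensive.
Import Order.TTheory GRing.Theory Num.Theory.
Local Open Scope ring_scope.

Section ACI.
Variable R : realType.

(* A = diag(G_1,...,G_m,[1]) of size n = 2m + b, where b = true iff the
   trailing 1x1 block [1] is present; G_j = [[c_j, s_j]; [-s_j, c_j]]
   (blocks indexed j = 0..m-1 here, i.e. G_{j+1} of the paper). *)
Definition blkA (m : nat) (b : bool) (c s : nat -> R) : 'M[R]_(m.*2 + b) :=
  \matrix_(i, j)
    if ((i < m.*2) && (j < m.*2) && (i./2 == j./2))%N then
      (if odd i then (if odd j then c i./2 else - s i./2)
                else (if odd j then s i./2 else c i./2))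
    else if ((m.*2 <= i) && (i == j :> nat))%N then 1 else 0.

Definition dotv n (u v : 'cV[R]_n) : R := \sum_i u i 0 * v i 0.
Definition vnorm n (v : 'cV[R]_n) : R := Num.sqrt (dotv v v).

Definition mxpeval n (A : 'M[R]_n) (p : {poly R}) : 'M[R]_n :=
  \sum_(i < size p) p`_i *: A ^+ i.

(* d(A,v) : degree of a monic polynomial of smallest degree with p(A)v = 0
   (such a polynomial always exists by Cayley--Hamilton). *)
Definition grade_pred n (A : 'M[R]_n) (v : 'cV[R]_n) : pred nat :=
  fun d => `[< exists p : {poly R},
              [/\ p \is monic, (size p).-1 = d & mxpeval A p *m v = 0] >].

Definition grade n (A : 'M[R]_n) (v : 'cV[R]_n) : nat :=
  match pselect (exists d, grade_pred A v d) with
  | left h => ex_minn h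
  | right _ => 0%N
  end.

Definition aci_wt n (A : 'M[R]_n) (v : 'cV[R]_n) : 'cV[R]_n :=
  (A - (dotv v (A *m v))%:M) *m v.
Definition aci_w n (A : 'M[R]_n) (v : 'cV[R]_n) : 'cV[R]_n :=
  (vnorm (aci_wt A v))^-1 *: aci_wt A v.
Definition aci_vt n (A : 'M[R]_n) (v : 'cV[R]_n) : 'cV[R]_n :=
  let w := aci_w A v in (A^T - (dotv w (A *m w))%:M) *m w.
Definition aci_step n (A : 'M[R]_n) (v : 'cV[R]_n) : 'cV[R]_n :=
  (vnorm (aci_vt A v))^-1 *: aci_vt A v.

Fixpoint aci_v n (A : 'M[R]_n) (v0 : 'cV[R]_n) (k : nat) : 'cV[R]_n :=
  if k is k'.+1 then aci_step A (aci_v A v0 k') else v0.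

End ACI.

(* Each block G_j is a rotation-scaling, so a shift A - t multiplies the squared
   norm of the j-th coordinate pair by |c_j + i s_j - t|^2.  The shifts of ACI(1)
   are Rayleigh quotients, which lie in [c_1, 1]; there the first pair is amplified
   most, by a margin of at least c_1 (c_2 - c_1) (read c_2 = 1 if m = 1).  Hence the ratio of the energy
   outside the first pair to the energy in it contracts by a fixed q < 1 at every
   half-step.  The coordinates outside the first pair are therefore O(q^k), while on
   the first pair one step acts as a rotation-scaling whose rotation part and norm
   change are both controlled by that ratio.  So successive iterates differ by
   O(q^k) and the sequence converges. *)

From HB Require Import structures.
From mathcomp Require Import all_boot all_order all_algebra.
From mathcomp Require Import all_classical all_reals all_analysis.
From mathcomp Require Import zify ring lra.
Import Order.TTheory GRing.Theory Num.Theory.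
Import numFieldNormedType.Exports.
Local Open Scope classical_set_scope.
Local Open Scope ring_scope.
Set Implicit Arguments. Unset Strict Implicit. Unset Printing Implicit Defensive.

Lemma sumr_nat_double (V : nmodType) (g : nat -> V) k :
  \sum_(0 <= i < k.*2) g i = \sum_(0 <= j < k) (g j.*2 + g j.*2.+1).
Proof.
elim: k => [|k IH]; first by rewrite !big_geq.
by rewrite doubleS !big_nat_recr //= IH addrA.
Qed.

Lemma cvgn_geometric_increments (R : realType) (V : completeNormedModType R)
    (u : V ^nat) (K r : R) : 0 <= r < 1 ->
  (forall k, `|u k.+1 - u k| <= K * r ^+ k) -> cvgn u.
Proof.
case/andP=> r0 r1 du.
have K0 : 0 <= K by have := du 0%N; rewrite expr0 mulr1; exact: le_trans.
have -> : u = (fun k => u 0%N + series (telescope u) k).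
  by apply: funext => k; rewrite -eq_sum_telescope.
apply: is_cvgD; first exact: is_cvg_cst.
apply: normed_cvg.
apply: (@series_le_cvg _ (fun k => `|telescope u k|) (geometric K r)) => /=.
- by move=> k; exact: normr_ge0.
- by move=> k; rewrite geometric_ge0.
- by move=> k; rewrite /telescope /=.
- by apply: is_cvg_geometric_series; rewrite ger0_norm.
Qed.

Lemma mx_cvgn_entries (R : realType) (M N : nat) (V : nat -> 'M[R]_(M, N)) :
  (forall i j, cvgn (fun k => V k i j)) -> exists l : 'M[R]_(M, N), V k @[k --> \oo] --> l.
Proof.
move=> hV; exists (\matrix_(i, j) limn (fun k => V k i j)).
apply/cvgrPdist_le => /= e e0; near=> k.
rewrite [leLHS]/Num.Def.normr /= mx_normrE (bigmax_le _ (ltW e0)) //= => -[i j] _.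
rewrite !mxE /=; move: i j; near: k.
apply: filter_forall => i; apply: filter_forall => j.
exact: ((cvgrPdist_le _ _).1 (hV i j)).
Unshelve. all: by end_near. Qed.

Definition incr_const (R : realFieldType) (sig E0 : R) :=
  1 + ((1 + E0) / sig) ^+ 2 * E0 + (1 + E0) / sig.

(* One step on the first pair maps [(x0, x1)] to [lam (a I + d J) (x0, x1)], [J] the
   quarter turn; the squared norms before and after are [1/(1+E)] and [1/(1+E')]. *)
Lemma rotscale_increment (R : realFieldType) (x0 x1 lam a d sig E E' E0 : R) :
  0 < sig -> sig <= a -> 0 <= lam -> 0 <= E' <= E -> E <= E0 -> `|d| <= E ->
  (x0 ^+ 2 + x1 ^+ 2) * (1 + E) = 1 ->
  ((lam * (a * x0 + d * x1)) ^+ 2 + (lam * (- d * x0 + a * x1)) ^+ 2) * (1 + E') = 1 ->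
  `|lam * (a * x0 + d * x1) - x0| <= incr_const sig E0 * E /\
  `|lam * (- d * x0 + a * x1) - x1| <= incr_const sig E0 * E.
Proof.
move=> sig0 siga lam0 /andP[E'0 E'E] EE0 dE hx hy.
have E_ge0 : 0 <= E := le_trans E'0 E'E.
set z := lam * a; set e := lam * d; set mu := (1 + E0) / sig.
have z0 : 0 <= z by rewrite mulr_ge0 // (le_trans (ltW sig0)).
have P0 : x0 ^+ 2 + x1 ^+ 2 != 0.
  by apply/eqP => h0; move: hx; rewrite h0 mul0r => /eqP; rewrite eq_sym oner_eq0.
have rho : (z ^+ 2 + e ^+ 2) * (1 + E') = 1 + E.
  apply: (mulIf P0); rewrite [RHS]mulrC hx -[RHS]hy /z /e; ring.
have rho_ge0 := mulr_ge0 (addr_ge0 (sqr_ge0 z) (sqr_ge0 e)) E'0.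
have rho1 : 1 <= z ^+ 2 + e ^+ 2 by nra.
have rhoE : z ^+ 2 + e ^+ 2 <= 1 + E by nra.
have hz1 : `|z - 1| <= E + e ^+ 2.
  by rewrite ler_norml; apply/andP; split; nra.
have hlam : lam <= mu.
  rewrite ler_pdivlMr //; apply: le_trans (ler_wpM2l lam0 siga) _.
  by rewrite -/z; nra.
have he : `|e| <= mu * E by rewrite normrM ger0_norm // ler_pM.
have he2 : e ^+ 2 <= mu ^+ 2 * E0 * E.
  have mu0 : 0 <= mu by apply: le_trans hlam.
  have ee : e ^+ 2 = `|e| ^+ 2 by rewrite -normrX ger0_norm ?sqr_ge0.
  have := ler_pM (normr_ge0 e) (normr_ge0 e) he he.
  have : mu ^+ 2 * E * E <= mu ^+ 2 * E0 * E.
    by rewrite ler_wpM2r // ler_wpM2l ?sqr_ge0.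
  by rewrite ee; lra.
have bnd u v : `|u| <= 1 -> `|v| <= 1 -> `|(z - 1) * u + e * v| <= incr_const sig E0 * E.
  move=> hu hv; apply: le_trans (ler_normD _ _) _; rewrite (normrM (z - 1)) (normrM e).
  have := ler_pM (normr_ge0 _) (normr_ge0 _) hz1 hu.
  have := ler_pM (normr_ge0 _) (normr_ge0 _) he hv.
  by rewrite /incr_const -/mu; lra.
have hP1 : x0 ^+ 2 + x1 ^+ 2 <= 1 by nra.
have hx0 : `|x0| <= 1 by rewrite ler_norml; apply/andP; split; nra.
have hx1 : `|x1| <= 1 by rewrite ler_norml; apply/andP; split; nra.
split.
- have -> : lam * (a * x0 + d * x1) - x0 = (z - 1) * x0 + e * x1 by rewrite /z /e; ring.
  exact: bnd.
- have -> : lam * (- d * x0 + a * x1) - x1 = (z - 1) * x1 + e * (- x0) by rewrite /z /e; ring.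
  by apply: bnd; rewrite ?normrN.
Qed.

Section Vectors.
Variables (R : realType) (n : nat).
Implicit Types (x : 'cV[R]_n).

Definition normalized x : 'cV[R]_n := (vnorm x)^-1 *: x.

Lemma dotv_ge0 x : 0 <= dotv x x.
Proof. by apply: sumr_ge0 => i _; rewrite -expr2 sqr_ge0. Qed.

Lemma dotv_eq1 x : vnorm x = 1 -> dotv x x = 1.
Proof. by move=> hx; rewrite -(sqr_sqrtr (dotv_ge0 x)) -/(vnorm x) hx expr1n. Qed.

Lemma dotvZ a x : dotv (a *: x) (a *: x) = a ^+ 2 * dotv x x.
Proof. by rewrite /dotv mulr_sumr; apply: eq_bigr => i _; rewrite !mxE; ring. Qed.

Lemma dotv_normalized x : 0 < dotv x x -> dotv (normalized x) (normalized x) = 1.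
Proof.
move=> hx; rewrite dotvZ /vnorm exprVn sqr_sqrtr ?(ltW hx) // mulVf //.
by rewrite gt_eqF.
Qed.

End Vectors.

Section Blocks.
Variables (R : realType) (m : nat) (b : bool) (c : nat -> R).
Local Notation n := (m.*2 + b)%N.
Implicit Types (x y : 'cV[R]_n) (s : nat -> R).

Definition vcoef x k : R := if insub k is Some i then x i 0 else 0.

Lemma vcoefE x (i : 'I_n) : vcoef x i = x i 0.
Proof. by rewrite /vcoef valK. Qed.

Lemma vcoef_out x k : (n <= k)%N -> vcoef x k = 0.
Proof. by move=> h; rewrite /vcoef insubF // ltnNge h. Qed.

Lemma vcoef0 k : vcoef 0 k = 0.
Proof. by rewrite /vcoef; case: insub => [i|]; rewrite ?mxE. Qed.

Lemma vcoefB x y k : vcoef (x - y) k = vcoef x k - vcoef y k.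
Proof. by rewrite /vcoef; case: insub => [i|]; rewrite ?mxE ?subr0. Qed.

Lemma vcoefZ a x k : vcoef (a *: x) k = a * vcoef x k.
Proof. by rewrite /vcoef; case: insub => [i|]; rewrite ?mxE ?mulr0. Qed.

Lemma sum_blocks (g : nat -> R) : (forall k, (n <= k)%N -> g k = 0) ->
  \sum_(i < n) g i = \sum_(j < m.+1) (g j.*2 + g j.*2.+1).
Proof.
move=> g0.
rewrite -(big_mkord xpredT g) -(big_mkord xpredT (fun j => g j.*2 + g j.*2.+1)).
rewrite -sumr_nat_double [RHS](big_cat_nat _ (n := n)) //=; last by case: b => /=; lia.
rewrite [X in _ + X]big_nat_cond [X in _ + X]big1 ?addr0 // => i /andP[/andP[hi _] _].
exact: g0.
Qed.

(* Block [j] of [blkA] acts on coordinates [2j], [2j+1] as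
   [[blk_c j, blk_s s j]; [- blk_s s j, blk_c j]]; block [m] is the trailing [1]. *)
Definition blk_c j := if (j < m)%N then c j else 1.
Definition blk_s s j := if (j < m)%N then s j else 0.

Definition blk_entry s (i j : nat) : R :=
  if ((i < m.*2) && (j < m.*2) && (i./2 == j./2))%N then
    (if odd i then (if odd j then c i./2 else - s i./2)
              else (if odd j then s i./2 else c i./2))
  else if ((m.*2 <= i) && (i == j :> nat))%N then 1 else 0.

Lemma blkA_entry s (i j : 'I_n) : blkA m b c s i j = blk_entry s i j.
Proof. by rewrite mxE. Qed.

Lemma blk_entry_off s i j : i./2 != j./2 -> blk_entry s i j = 0.
Proof.
move=> ne; rewrite /blk_entry (negbTE ne) andbF.
by case: eqP => [e|]; [move: ne; rewrite e eqxx | rewrite andbF].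
Qed.

Lemma vcoef_mulmx_blkA_row s x j k : (k < n)%N -> k./2 = j ->
  vcoef (blkA m b c s *m x) k =
  blk_entry s k j.*2 * vcoef x j.*2 + blk_entry s k j.*2.+1 * vcoef x j.*2.+1.
Proof.
move=> hk hkj; rewrite -[k]/(nat_of_ord (Ordinal hk)) vcoefE mxE /=.
under eq_bigr => l _ do rewrite blkA_entry -vcoefE.
rewrite (sum_blocks (g := fun l => blk_entry s k l * vcoef x l)); last first.
  by move=> l hl; rewrite vcoef_out ?mulr0.
have hj : (j < m.+1)%N by case: b hk hkj => /= hk hkj; lia.
rewrite (bigD1 (Ordinal hj)) //= big1 ?addr0 // => i ne.
rewrite !blk_entry_off ?mul0r ?addr0 //; apply: contra ne => /eqP e;
  apply/eqP/val_inj => /=; lia.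
Qed.

Lemma vcoef_mulmx_blkA s x j :
  vcoef (blkA m b c s *m x) j.*2 = blk_c j * vcoef x j.*2 + blk_s s j * vcoef x j.*2.+1 /\
  vcoef (blkA m b c s *m x) j.*2.+1 = - blk_s s j * vcoef x j.*2 + blk_c j * vcoef x j.*2.+1.
Proof.
have half0 : (j.*2)./2 = j by lia.
have half1 : (j.*2.+1)./2 = j by lia.
rewrite /blk_c /blk_s; have [hjm|hjm] := ltnP j m.
- rewrite (vcoef_mulmx_blkA_row _ _ _ half0) ?(vcoef_mulmx_blkA_row _ _ _ half1); [|lia|lia].
  rewrite /blk_entry /= odd_double doubleK uphalf_double /= !eqxx.
  have -> : (j.*2 < m.*2)%N by lia.
  by have -> : (j.*2.+1 < m.*2)%N by lia.
- have hx1 : vcoef x j.*2.+1 = 0 by rewrite vcoef_out //; case: b; lia.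
  rewrite hx1 (vcoef_out _ (k := j.*2.+1)); last by case: b; lia.
  rewrite oppr0 !mul0r !mulr0 !addr0; split => //.
  have [h0|h0] := ltnP j.*2 n; last by rewrite !vcoef_out ?mulr0.
  rewrite (vcoef_mulmx_blkA_row _ _ h0 half0) hx1 mulr0 addr0 /blk_entry.
  have -> : (j.*2 < m.*2)%N = false by apply/negbTE; lia.
  by rewrite leq_double hjm /= eqxx.
Qed.

Lemma trmx_blkA s : (blkA m b c s)^T = blkA m b c (fun j => - s j).
Proof.
apply/matrixP => i j; rewrite !mxE eq_sym [(j < _)%N && _]andbC.
have -> : ((m.*2 <= j) && (j == i :> nat))%N = ((m.*2 <= i) && (i == j :> nat))%N.
  by rewrite [(j == i :> nat)]eq_sym; case: eqP => [->|_]; rewrite ?andbF.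
case: ifP => // /andP[_ /eqP ->].
by case: (odd i); case: (odd j); rewrite ?opprK.
Qed.

Definition blk_norm2 j x := vcoef x j.*2 ^+ 2 + vcoef x j.*2.+1 ^+ 2.

Lemma blk_norm2_ge0 j x : 0 <= blk_norm2 j x.
Proof. by rewrite addr_ge0 // sqr_ge0. Qed.

Lemma blk_norm2Z a x j : blk_norm2 j (a *: x) = a ^+ 2 * blk_norm2 j x.
Proof. by rewrite /blk_norm2 !vcoefZ; ring. Qed.

Lemma dotv_blocks x y : dotv x y =
  \sum_(j < m.+1) (vcoef x j.*2 * vcoef y j.*2 + vcoef x j.*2.+1 * vcoef y j.*2.+1).
Proof.
rewrite /dotv; under eq_bigr => i _ do rewrite -!vcoefE.
by rewrite (sum_blocks (g := fun k => vcoef x k * vcoef y k)) // => k hk; rewrite vcoef_out ?mul0r.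
Qed.

Lemma dotv_blk_norm2 x : dotv x x = \sum_(j < m.+1) blk_norm2 j x.
Proof. by rewrite dotv_blocks; apply: eq_bigr => j _; rewrite /blk_norm2 !expr2. Qed.

Lemma dotv_mulmx_blkA s x :
  dotv x (blkA m b c s *m x) = \sum_(j < m.+1) blk_c j * blk_norm2 j x.
Proof.
rewrite dotv_blocks; apply: eq_bigr => j _.
by have [-> ->] := vcoef_mulmx_blkA s x j; rewrite /blk_norm2; ring.
Qed.

Lemma vcoef_shift_blkA s t x j :
  vcoef ((blkA m b c s - t%:M) *m x) j.*2
    = (blk_c j - t) * vcoef x j.*2 + blk_s s j * vcoef x j.*2.+1 /\
  vcoef ((blkA m b c s - t%:M) *m x) j.*2.+1
    = - blk_s s j * vcoef x j.*2 + (blk_c j - t) * vcoef x j.*2.+1.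
Proof.
rewrite mulmxBl mul_scalar_mx !vcoefB !vcoefZ.
by have [-> ->] := vcoef_mulmx_blkA s x j; split; ring.
Qed.

Lemma blk_cs s : (forall j, (j < m)%N -> c j ^+ 2 + s j ^+ 2 = 1) ->
  forall j, blk_c j ^+ 2 + blk_s s j ^+ 2 = 1.
Proof. by move=> hcs j; rewrite /blk_c /blk_s; case: ifP => [/hcs|_] //; rewrite expr1n expr0n addr0. Qed.

Lemma blk_norm2_0_gt0 x (i : 'I_n) : (i < 2)%N -> x i 0 != 0 -> 0 < blk_norm2 0 x.
Proof.
move=> hi hx; have hsq : 0 < vcoef x i ^+ 2 by rewrite vcoefE exprn_even_gt0.
rewrite /blk_norm2 double0.
have := sqr_ge0 (vcoef x 0); have := sqr_ge0 (vcoef x 1).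
by move: hsq; case: i hi hx => [[|[|//]]] /= _ _ _ hsq; lra.
Qed.

Definition tail x := \sum_(j < m) blk_norm2 j.+1 x.
Definition tail_ratio x := tail x / blk_norm2 0 x.

Lemma tail_ge0 x : 0 <= tail x.
Proof. by apply: sumr_ge0 => j _; apply: blk_norm2_ge0. Qed.

Lemma tail_ratio_ge0 x : 0 <= tail_ratio x.
Proof. by rewrite divr_ge0 ?tail_ge0 ?blk_norm2_ge0. Qed.

Lemma dotv_head_tail x : dotv x x = blk_norm2 0 x + tail x.
Proof. by rewrite dotv_blk_norm2 big_ord_recl. Qed.

Lemma head_le_dotv x : blk_norm2 0 x <= dotv x x.
Proof. by rewrite dotv_head_tail lerDl tail_ge0. Qed.

Lemma head_inv x : dotv x x = 1 -> 0 < blk_norm2 0 x ->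
  blk_norm2 0 x * (1 + tail_ratio x) = 1.
Proof.
move=> hx hp; rewrite mulrDr mulr1 /tail_ratio mulrCA mulfV ?gt_eqF // mulr1.
by rewrite -dotv_head_tail.
Qed.

Lemma tail_le_ratio x : dotv x x = 1 -> 0 < blk_norm2 0 x -> tail x <= tail_ratio x.
Proof.
move=> hx hp; rewrite /tail_ratio ler_pdivlMr // ler_piMr ?tail_ge0 //.
by rewrite -hx head_le_dotv.
Qed.

Lemma vcoef_sq_le_tail x i : (2 <= i)%N -> vcoef x i ^+ 2 <= tail x.
Proof.
move=> hi; set j := i./2.
have h1 : vcoef x i ^+ 2 <= blk_norm2 j x.
  rewrite /blk_norm2 -/j; have := odd_double_half i.
  by case: (odd i) => /= <-; rewrite ?add0n ?lerDr ?lerDl sqr_ge0.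
apply: le_trans h1 _; have [hjm|hjm] := leqP j m.
- have hj' : (j.-1 < m)%N by lia.
  rewrite /tail (bigD1 (Ordinal hj')) //= (_ : j.-1.+1 = j); last by lia.
  by rewrite lerDl sumr_ge0 // => l _; apply: blk_norm2_ge0.
- by rewrite /blk_norm2 !vcoef_out ?expr0n ?addr0 ?tail_ge0 //; case: b; lia.
Qed.

End Blocks.

Section Contraction.
Variables (R : realType) (m : nat) (b : bool) (c s : nat -> R).
Local Notation n := (m.*2 + b)%N.
Implicit Types (x y : 'cV[R]_n).
Hypothesis m_gt0 : (0 < m)%N.
Hypothesis cs_unit : forall j, (j < m)%N -> c j ^+ 2 + s j ^+ 2 = 1.
Hypothesis c0_gt0 : 0 < c 0%N.
Hypothesis c_incr : forall j, (j.+1 < m)%N -> c j < c j.+1.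
Hypothesis c_last_lt1 : c m.-1 < 1.

Local Notation A := (blkA m b c s).
Local Notation C := (blk_c m c).

Lemma cs_unitN j : (j < m)%N -> c j ^+ 2 + (- s j) ^+ 2 = 1.
Proof. by rewrite sqrrN; apply: cs_unit. Qed.

Lemma c_mono i j : (i <= j)%N -> (j < m)%N -> c i <= c j.
Proof.
move=> hij; elim: j hij => [|j IH]; first by rewrite leqn0 => /eqP ->.
rewrite leq_eqVlt => /orP[/eqP -> //|hij] hj.
exact: le_trans (IH hij (ltnW hj)) (ltW (c_incr hj)).
Qed.

Lemma c_lt1 j : (j < m)%N -> c j < 1.
Proof. by move=> hj; apply: le_lt_trans c_last_lt1; apply: c_mono => //; lia. Qed.

Lemma blk_c0 : C 0%N = c 0%N.
Proof. by rewrite /blk_c m_gt0. Qed.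

Lemma blk_c_mono i j : (i <= j)%N -> C i <= C j.
Proof.
move=> hij; rewrite /blk_c; case: ifP => hi; case: ifP => hj //.
- exact: c_mono.
- exact/ltW/c_lt1.
- lia.
Qed.

Lemma blk_c_range j : c 0%N <= C j <= 1.
Proof.
rewrite -blk_c0 blk_c_mono //= /blk_c; case: ifP => // hj.
exact/ltW/c_lt1.
Qed.

Lemma sigma_gt0 : 0 < 1 - c 0%N ^+ 2.
Proof. by have := c_lt1 m_gt0; have := c0_gt0; nra. Qed.

(* [gain j t] is [|c_j + i s_j - t|^2], the factor by which [A - t] scales the
   squared norm of block [j]. *)
Definition gain j t := 1 - 2 * t * C j + t ^+ 2.

Lemma blk_norm2_shift s' t x j :
  (forall j, (j < m)%N -> c j ^+ 2 + s' j ^+ 2 = 1) ->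
  blk_norm2 j ((blkA m b c s' - t%:M) *m x) = gain j t * blk_norm2 j x.
Proof.
move=> hcs; have := blk_cs hcs j; rewrite /blk_norm2 /gain.
by have [-> ->] := vcoef_shift_blkA c s' t x j => hj; nra.
Qed.

Lemma gain0_ge t : 1 - c 0%N ^+ 2 <= gain 0 t.
Proof. by rewrite /gain blk_c0; have := sqr_ge0 (t - c 0%N); nra. Qed.

Lemma gain0_gt0 t : 0 < gain 0 t.
Proof. exact: lt_le_trans sigma_gt0 (gain0_ge t). Qed.

(* [gain 0 t - gain j t = 2 t (C j - c_0) >= 2 c_0 (C 1 - c_0)] and [gain 0 t <= 2]. *)
Definition q := 1 - c 0%N * (C 1 - c 0%N).

Lemma gap_gt0 : 0 < C 1 - c 0%N.
Proof.
rewrite subr_gt0 /blk_c; case: ifP => h; first exact: c_incr.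
exact: c_lt1.
Qed.

Lemma q_ge0 : 0 <= q.
Proof.
have /andP[_ hC1] := blk_c_range 1; have := c_lt1 m_gt0.
have : 0 <= c 0%N * (1 - C 1) by rewrite mulr_ge0 ?subr_ge0 // ltW.
by rewrite /q; nra.
Qed.

Lemma q_lt1 : q < 1.
Proof. by have := mulr_gt0 c0_gt0 gap_gt0; rewrite /q; lra. Qed.

Lemma gain_contract j t : (0 < j)%N -> c 0%N <= t <= 1 -> gain j t <= q * gain 0 t.
Proof.
move=> hj /andP[ht1 ht2].
have hC : C 1 <= C j := blk_c_mono hj.
have hd := gap_gt0.
have h1 : c 0%N * (C 1 - c 0%N) <= t * (C j - c 0%N).
  by apply: ler_pM; rewrite ?(ltW c0_gt0) ?(ltW hd) ?lerD2r.
have h2 : gain 0 t <= 2.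
  by rewrite /gain blk_c0; have := c0_gt0; nra.
have h3 := ler_wpM2l (ltW (mulr_gt0 c0_gt0 hd)) h2.
by move: h3; rewrite /gain /q blk_c0; lra.
Qed.

Lemma rayleigh_range s' x : dotv x x = 1 ->
  c 0%N <= dotv x (blkA m b c s' *m x) <= 1.
Proof.
move=> hx; rewrite dotv_mulmx_blkA; rewrite dotv_blk_norm2 in hx; apply/andP; split.
- rewrite -[c 0%N]mulr1 -hx mulr_sumr; apply: ler_sum => j _.
  by have /andP[h _] := blk_c_range j; rewrite ler_wpM2r ?blk_norm2_ge0.
- rewrite -hx; apply: ler_sum => j _.
  by have /andP[_ h] := blk_c_range j; rewrite ler_piMl ?blk_norm2_ge0.
Qed.

Lemma rayleigh_sub_c0 s' x : dotv x x = 1 ->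
  dotv x (blkA m b c s' *m x) - c 0%N <= tail x.
Proof.
move=> hx; rewrite dotv_mulmx_blkA; rewrite dotv_blk_norm2 in hx.
rewrite -[X in _ - X]mulr1 -hx mulr_sumr -sumrB big_ord_recl blk_c0 subrr add0r.
apply: ler_sum => j _; rewrite -mulrBl ler_piMl ?blk_norm2_ge0 //.
by have /andP[_ h] := blk_c_range j.+1; have := c0_gt0; lra.
Qed.

Lemma normalized_shift s' t y :
  (forall j, (j < m)%N -> c j ^+ 2 + s' j ^+ 2 = 1) ->
  c 0%N <= t <= 1 -> 0 < blk_norm2 0 y ->
  let z := (blkA m b c s' - t%:M) *m y in
  [/\ z != 0, dotv (normalized z) (normalized z) = 1,
      0 < blk_norm2 0 (normalized z) & tail_ratio (normalized z) <= q * tail_ratio y].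
Proof.
move=> hcs ht hy z.
have hz j : blk_norm2 j z = gain j t * blk_norm2 j y by exact: blk_norm2_shift.
have hz0 : 0 < blk_norm2 0 z by rewrite hz mulr_gt0 ?gain0_gt0.
have hzz : 0 < dotv z z := lt_le_trans hz0 (head_le_dotv z).
set a := (vnorm z)^-1.
have ha : 0 < a ^+ 2 * gain 0 t.
  by rewrite mulr_gt0 ?gain0_gt0 // exprn_gt0 // invr_gt0 sqrtr_gt0.
have head : blk_norm2 0 (normalized z) = a ^+ 2 * gain 0 t * blk_norm2 0 y.
  by rewrite blk_norm2Z hz mulrA.
have tl : tail (normalized z) <= q * (a ^+ 2 * gain 0 t) * tail y.
  rewrite /tail mulr_sumr; apply: ler_sum => j _; rewrite blk_norm2Z hz.
  have -> : q * (a ^+ 2 * gain 0 t) * blk_norm2 j.+1 y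
          = a ^+ 2 * (q * gain 0 t * blk_norm2 j.+1 y) by ring.
  by rewrite ler_wpM2l ?sqr_ge0 // ler_wpM2r ?blk_norm2_ge0 ?gain_contract.
split.
- by apply: contraTneq hz0 => ->; rewrite /blk_norm2 !vcoef0 expr0n addr0 ltxx.
- exact: dotv_normalized.
- by rewrite head mulr_gt0.
- rewrite /tail_ratio head ler_pdivrMr; last by rewrite mulr_gt0.
  have -> : q * (tail y / blk_norm2 0 y) * (a ^+ 2 * gain 0 t * blk_norm2 0 y)
          = q * (a ^+ 2 * gain 0 t) * tail y by field; rewrite gt_eqF.
  exact: tl.
Qed.

Lemma aci_w_props x : dotv x x = 1 -> 0 < blk_norm2 0 x ->
  [/\ aci_wt A x != 0, dotv (aci_w A x) (aci_w A x) = 1,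
      0 < blk_norm2 0 (aci_w A x) & tail_ratio (aci_w A x) <= q * tail_ratio x].
Proof. by move=> hx hp; exact: (normalized_shift cs_unit (rayleigh_range s hx) hp). Qed.

Lemma aci_step_props x : dotv x x = 1 -> 0 < blk_norm2 0 x ->
  [/\ aci_vt A x != 0, dotv (aci_step A x) (aci_step A x) = 1,
      0 < blk_norm2 0 (aci_step A x) &
      tail_ratio (aci_step A x) <= q * tail_ratio (aci_w A x)].
Proof.
move=> hx hp; have [_ hw1 hw2 _] := aci_w_props hx hp.
rewrite /aci_step /aci_vt /= trmx_blkA.
exact: (normalized_shift cs_unitN (rayleigh_range s hw1) hw2).
Qed.

Lemma aci_v_props v0 : dotv v0 v0 = 1 -> 0 < blk_norm2 0 v0 -> forall k,
  [/\ dotv (aci_v A v0 k) (aci_v A v0 k) = 1, 0 < blk_norm2 0 (aci_v A v0 k) &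
      tail_ratio (aci_v A v0 k) <= (q ^+ k) ^+ 2 * tail_ratio v0].
Proof.
move=> h1 h2; elim=> [|k [IH1 IH2 IH3]]; first by rewrite expr0 expr1n mul1r.
have [_ _ _ hw] := aci_w_props IH1 IH2.
have [_ hv1 hv2 hv] := aci_step_props IH1 IH2.
split => //=; apply: (le_trans hv); apply: le_trans (ler_wpM2l q_ge0 hw) _.
rewrite mulrA -expr2 [q ^+ k.+1]exprS exprMn -[leRHS]mulrA.
by apply: ler_wpM2l IH3; rewrite exprn_ge0 ?q_ge0.
Qed.

Lemma aci_step_head x :
  let al := dotv x (A *m x) in
  let be := dotv (aci_w A x) (A *m aci_w A x) in
  let lam := (vnorm (aci_vt A x))^-1 * (vnorm (aci_wt A x))^-1 in
  let a := (c 0%N - al) * (c 0%N - be) + s 0%N ^+ 2 in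
  let d := s 0%N * (al - be) in
  vcoef (aci_step A x) 0 = lam * (a * vcoef x 0 + d * vcoef x 1) /\
  vcoef (aci_step A x) 1 = lam * (- d * vcoef x 0 + a * vcoef x 1).
Proof.
move=> al be lam a d.
have wt : aci_wt A x = (A - al%:M) *m x by [].
have vt : aci_vt A x = (blkA m b c (fun j => - s j) - be%:M) *m aci_w A x.
  by rewrite /aci_vt /= trmx_blkA.
have [w0 w1] := vcoef_shift_blkA c s al x 0.
have [v0 v1] := vcoef_shift_blkA c (fun j => - s j) be (aci_w A x) 0.
rewrite -wt /blk_c /blk_s m_gt0 double0 in w0 w1.
rewrite -vt /blk_c /blk_s m_gt0 double0 /aci_w !vcoefZ w0 w1 in v0 v1.
by rewrite /aci_step !vcoefZ v0 v1 /lam /a /d; split; ring.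
Qed.

Lemma aci_step_head_increment x E0 : dotv x x = 1 -> 0 < blk_norm2 0 x ->
  tail_ratio x <= E0 ->
  `|vcoef (aci_step A x) 0 - vcoef x 0| <= incr_const (1 - c 0%N ^+ 2) E0 * tail_ratio x /\
  `|vcoef (aci_step A x) 1 - vcoef x 1| <= incr_const (1 - c 0%N ^+ 2) E0 * tail_ratio x.
Proof.
move=> hx hp hE.
have [_ hw1 hw2 hw] := aci_w_props hx hp.
have [_ hv1 hv2 hv] := aci_step_props hx hp.
have q1 := ltW q_lt1.
have hEw : tail_ratio (aci_w A x) <= tail_ratio x.
  by apply: le_trans hw _; rewrite ler_piMl ?tail_ratio_ge0.
have hEv : tail_ratio (aci_step A x) <= tail_ratio x.
  by apply: le_trans hv _; apply: le_trans hEw; rewrite ler_piMl ?tail_ratio_ge0.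
have /andP[al0 _] := rayleigh_range s hx.
have /andP[be0 _] := rayleigh_range s hw1.
have al1 := le_trans (rayleigh_sub_c0 s hx) (tail_le_ratio hx hp).
have be1 := le_trans (rayleigh_sub_c0 s hw1) (tail_le_ratio hw1 hw2).
have s0 : s 0%N ^+ 2 = 1 - c 0%N ^+ 2 by have := cs_unit m_gt0; lra.
have hx0 := head_inv hx hp.
have hy := head_inv hv1 hv2.
rewrite /blk_norm2 double0 in hx0 hy.
have [e0 e1] := aci_step_head x.
rewrite e0 e1 in hy *.
apply: (rotscale_increment _ _ _ _ _ _ hx0 hy).
- exact: sigma_gt0.
- by rewrite s0; nra.
- by rewrite mulr_ge0 // invr_ge0 sqrtr_ge0.
- by rewrite tail_ratio_ge0 hEv.
- exact: hE.
- have hs0 : `|s 0%N| <= 1.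
    have : s 0%N ^+ 2 <= 1 by rewrite s0; have := sqr_ge0 (c 0%N); lra.
    by rewrite ler_norml => ?; apply/andP; split; nra.
  have hab : `|dotv x (A *m x) - dotv (aci_w A x) (A *m aci_w A x)| <= tail_ratio x.
    by rewrite ler_norml; apply/andP; split; lra.
  by rewrite normrM -[tail_ratio x]mul1r ler_pM.
Qed.

Lemma vcoef_tail_bound x i r E0 : (2 <= i)%N -> dotv x x = 1 -> 0 < blk_norm2 0 x ->
  0 <= r -> 0 <= E0 -> tail_ratio x <= r ^+ 2 * E0 -> `|vcoef x i| <= Num.sqrt E0 * r.
Proof.
move=> hi hx hp r0 E00 hE.
have h : vcoef x i ^+ 2 <= (Num.sqrt E0 * r) ^+ 2.
  rewrite exprMn sqr_sqrtr // mulrC.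
  exact: le_trans (vcoef_sq_le_tail x hi) (le_trans (tail_le_ratio hx hp) hE).
have : 0 <= Num.sqrt E0 * r by rewrite mulr_ge0 ?sqrtr_ge0.
by rewrite ler_norml => ?; apply/andP; split; nra.
Qed.

Definition incr_bound E0 := incr_const (1 - c 0%N ^+ 2) E0 * E0 + 2 * Num.sqrt E0.

Lemma aci_v_increment v0 k i : dotv v0 v0 = 1 -> 0 < blk_norm2 0 v0 ->
  `|vcoef (aci_v A v0 k.+1) i - vcoef (aci_v A v0 k) i|
    <= incr_bound (tail_ratio v0) * q ^+ k.
Proof.
move=> h1 h2.
have [a1 a2 a3] := aci_v_props h1 h2 k.
have [b1 b2 b3] := aci_v_props h1 h2 k.+1.
set E0 := tail_ratio v0 in a3 b3 *; set r := q ^+ k in a3 *.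
have E00 : 0 <= E0 := tail_ratio_ge0 v0.
have r0 : 0 <= r by rewrite exprn_ge0 ?q_ge0.
have r1 : r <= 1 by rewrite exprn_ile1 ?q_ge0 ?(ltW q_lt1).
have b3' : tail_ratio (aci_v A v0 k.+1) <= r ^+ 2 * E0.
  have qr : q ^+ k.+1 <= r by rewrite exprS ler_piMl // ltW ?q_lt1.
  by apply: le_trans b3 _; rewrite ler_wpM2r // !expr2 ler_pM // exprn_ge0 ?q_ge0.
have K0 : 0 <= incr_const (1 - c 0%N ^+ 2) E0.
  have mu0 : 0 <= (1 + E0) / (1 - c 0%N ^+ 2) by rewrite divr_ge0 ?(ltW sigma_gt0) // addr_ge0.
  by rewrite /incr_const !addr_ge0 ?ler01 // mulr_ge0 // sqr_ge0.
have sq0 : 0 <= Num.sqrt E0 := sqrtr_ge0 E0.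
have [hi|hi] := leqP i 1.
- have hEk : tail_ratio (aci_v A v0 k) <= E0.
    by apply: le_trans a3 _; rewrite ler_piMl // expr_le1.
  have [i0 i1] := aci_step_head_increment a1 a2 hEk.
  apply: le_trans (_ : _ <= incr_const (1 - c 0%N ^+ 2) E0 * tail_ratio (aci_v A v0 k)) _.
    by case: i hi => [|[|//]].
  have := ler_wpM2l K0 a3.
  have : 0 <= incr_const (1 - c 0%N ^+ 2) E0 * E0 * (r - r ^+ 2).
    by apply: mulr_ge0; [exact: mulr_ge0 | rewrite subr_ge0 expr2 ler_piMl].
  have := mulr_ge0 sq0 r0.
  by rewrite /incr_bound; lra.
- have c1 := vcoef_tail_bound hi a1 a2 r0 E00 a3.
  have c2 := vcoef_tail_bound hi b1 b2 r0 E00 b3'.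
  apply: le_trans (ler_normB _ _) _.
  have : 0 <= incr_const (1 - c 0%N ^+ 2) E0 * E0 * r by rewrite mulr_ge0 // mulr_ge0.
  by rewrite /incr_bound; lra.
Qed.

Lemma aci_v_well_defined v0 : dotv v0 v0 = 1 -> 0 < blk_norm2 0 v0 -> forall k,
  aci_wt A (aci_v A v0 k) != 0 /\ aci_vt A (aci_v A v0 k) != 0.
Proof.
move=> h1 h2 k; have [hk1 hk2 _] := aci_v_props h1 h2 k.
by have [? _ _ _] := aci_w_props hk1 hk2; have [? _ _ _] := aci_step_props hk1 hk2.
Qed.

Lemma aci_v_cvg v0 : dotv v0 v0 = 1 -> 0 < blk_norm2 0 v0 ->
  exists l : 'cV[R]_n, aci_v A v0 k @[k --> \oo] --> l.
Proof.
move=> h1 h2; apply: mx_cvgn_entries => i j; rewrite (ord1 j).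
apply: (@cvgn_geometric_increments _ _ _ (incr_bound (tail_ratio v0)) q).
  by rewrite q_ge0 q_lt1.
by move=> k; rewrite -!vcoefE; exact: aci_v_increment.
Qed.

End Contraction.

Theorem theorem4p8 (R : realType) (m : nat) (b : bool) (c s : nat -> R)
  (v0 : 'cV[R]_(m.*2 + b)) :
  (1 <= m)%N ->
  (forall j, (j < m)%N -> c j ^+ 2 + s j ^+ 2 = 1) ->
  (forall j, (j < m)%N -> s j != 0) ->
  0 < c 0%N ->
  (forall j, (j.+1 < m)%N -> c j < c j.+1) ->
  c m.-1 < 1 ->
  vnorm v0 = 1 ->
  (2 <= grade (blkA m b c s) v0)%N ->
  (exists i : 'I_(m.*2 + b), (i < 2)%N && (v0 i 0 != 0)) ->
  (forall k, aci_wt (blkA m b c s) (aci_v (blkA m b c s) v0 k) != 0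
          /\ aci_vt (blkA m b c s) (aci_v (blkA m b c s) v0 k) != 0) /\
  exists l : 'cV[R]_(m.*2 + b), aci_v (blkA m b c s) v0 k @[k --> \oo] --> l.
Proof.
move=> m_gt0 cs_unit _ c0_gt0 c_incr c_last_lt1 /dotv_eq1 hv0 _ [i /andP[hi hvi]].
have h0 := blk_norm2_0_gt0 hi hvi.
split; first exact: aci_v_well_defined.
exact: aci_v_cvg.
Qed.
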